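(* Let $G=B(H)$ for some connected graph $H$ with at least one edge. Then $KB_e(G)$ is a cycle, a path, or contains an induced $(n,m)$-necklace with $n\ge 6$ and $m\ge 1$ whose cycle has good neighbours in $KB_e(G)$.
   Context: All graphs are finite, simple and undirected. A biclique of a graph $X$ is a maximal (with respect to inclusion) induced subgraph of $X$ that is a complete bipartite graph $K_{p,q}$ with $p,q\ge 1$; $KB_e(X)$ has one vertex per biclique of $X$, two distinct vertices adjacent iff the bicliques share an edge. The burgeon graph $B(H)$ is obtained by replacing each vertex $v$ of $H$ by a clique $C_v$ on $d(v)$ vertices, whose vertices are in bijection with the neighbours of $v$; for each edge $uv$ of $H$, the vertex of $C_v$ corresponding to $u$ is joined to the vertex of $C_u$ corresponding to $v$; there are no other edges between different cliques. For $n\ge3$, $m\ge1$, the $(n,m)$-necklace is the graph on $n+m$ vertices consisting of an induced cycle $C_n$ and a complete graph $K_m$ such that, for one fixed edge $xy$ of the cycle, every vertex of the $K_m$ is adjacent to $x$ and $y$ and to no other vertex of the cycle. An induced cycle $C=v_0\ldots v_{n-1}$ ($n\ge5$) of a graph $X$ has good neighbours in $X$ if for every vertex $v\in V(X)\setminus V(C)$ and every $i$ (indices mod $n$), $\{v_{i-1},v_{i+1}\}\subseteq N(v)$ implies $v_i\in N(v)$. *)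

(* Finite simple graphs are symmetric irreflexive relations on finTypes. *)
From mathcomp Require Import all_boot.
Set Implicit Arguments. Unset Strict Implicit. Unset Printing Implicit Defensive.

Section Graphs.
Variable V : finType.
Variable r : rel V.

Definition indep (A : {set V}) : bool :=
  [forall x in A, forall y in A, ~~ r x y].

Definition is_cbip (S : {set V}) : bool :=
  [exists A : {set V},
    [&& A \subset S, A != set0, S :\: A != set0, indep A, indep (S :\: A)
      & [forall x in A, forall y in S :\: A, r x y]]].

Definition biclique (S : {set V}) : bool :=
  is_cbip S && [forall S' : {set V}, (S \subset S') && is_cbip S' ==> (S' == S)].

Definition KBvert := {S : {set V} | biclique S}.

Definition KBrel : rel KBvert := fun S1 S2 =>
  (S1 != S2) &&
  [exists x : V, exists y : V,
     [&& x \in val S1 :&: val S2, y \in val S1 :&: val S2 & r x y]].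

Definition cyc_adj (k i j : nat) : bool := (i.+1 %% k == j) || (j.+1 %% k == i).

Definition is_path : Prop :=
  exists k (f : 'I_k -> V),
    [/\ 0 < k, bijective f &
        forall i j : 'I_k, r (f i) (f j) = ((i.+1 == j) || (j.+1 == i))].

Definition is_cycle : Prop :=
  exists k (f : 'I_k -> V),
    [/\ 2 < k, bijective f &
        forall i j : 'I_k, r (f i) (f j) = cyc_adj k i j].

(* (V, r) contains an induced (n,m)-necklace with n >= 6, m >= 1: induced cycle
   c_0 ... c_{n-1}, clique d_0 ... d_{m-1}, every d_j adjacent exactly to c_0 and
   c_1 on the cycle; moreover the cycle has good neighbours in (V, r). *)
Definition has_good_necklace : Prop :=
  exists n m (c : 'I_n -> V) (d : 'I_m -> V),
    [/\ 6 <= n, 1 <= m, injective c, injective d &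
        (forall i j, c i != d j)] /\
    [/\ (forall i j : 'I_n, r (c i) (c j) = cyc_adj n i j),
        (forall j j' : 'I_m, r (d j) (d j') = (j != j')),
        (forall (i : 'I_n) (j : 'I_m), r (c i) (d j) = (val i <= 1)) &
        (forall v : V, (forall i, v != c i) ->
           forall i j l : 'I_n, val j = i.+1 %% n -> val l = j.+1 %% n ->
             r v (c i) -> r v (c l) -> r v (c j))].

End Graphs.

(* Burgeon graph B(H) of H = (T, e): vertex (v,u) (an arc with e v u) is the
   vertex of the clique C_v corresponding to the neighbour u of v. *)
Definition Bvert (T : finType) (e : rel T) := {p : T * T | e p.1 p.2}.

Definition Brel (T : finType) (e : rel T) : rel (Bvert e) := fun a b =>
  ((val a).1 == (val b).1) && ((val a).2 != (val b).2)
  || ((val a).1 == (val b).2) && ((val a).2 == (val b).1).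
Arguments Brel {T} e.
Arguments KBrel {V} r.

(* Every biclique of B(H) is a path (v,w) - (v,u) - (u,v) given by a path u - v - w
   of H (a wedge centred at v), except when H = K_2.  Two such bicliques share an
   edge iff they have the same central edge vu of H, or they are (v,u,w) and
   (v,w,u).  If a vertex v has neighbours a, b, c and either a fourth neighbour w or
   a neighbour x <> v of a, then the six wedges centred at v with ends in {a, b, c}
   form an induced hexagon of KB_e(B(H)), to which the wedge (v,a,w), resp.
   (a,v,x), is attached at two consecutive vertices; a biclique outside the hexagon
   meets it only through a common central edge, which yields the good neighbours.
   Otherwise every biclique has at most two neighbours, and KB_e(B(H)) is connected,
   hence a path or a cycle. *)

From mathcomp Require Import all_boot zify.
Set Implicit Arguments. Unset Strict Implicit. Unset Printing Implicit Defensive.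

Section ConnectedGraph.
Variables (V : finType) (r : rel V).
Hypotheses (r_sym : symmetric r) (r_conn : forall x y, connect r x y).

Lemma succ_closed_full (A : {set V}) :
  (forall x y, x \in A -> r x y -> y \in A) -> forall x y, x \in A -> y \in A.
Proof.
move=> A_cl x y Ax; have clA : closed r A.
  by apply: (intro_closed (sym_connect_sym r_sym)) => a b rab /A_cl; apply.
by rewrite -(closed_connect clA (r_conn x y)).
Qed.

End ConnectedGraph.

Lemma cyc_adj_sym n i j : cyc_adj n i j = cyc_adj n j i.
Proof. by rewrite /cyc_adj orbC. Qed.

Lemma cyc_adj_lt n i j : i < j < n -> 2 < n ->
  cyc_adj n i j = (j == i.+1) || (i == 0) && (j == n.-1).
Proof.
move=> /andP[Hij Hjn] Hn; rewrite /cyc_adj (modn_small (leq_ltn_trans Hij Hjn)).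
have [Hj|Hj] : j.+1 = n \/ j.+1 < n by lia.
  by rewrite Hj modnn; lia.
by rewrite (modn_small Hj); lia.
Qed.

Lemma cyc_adj_diag n i : i < n -> 2 < n -> cyc_adj n i i = false.
Proof.
move=> Hi Hn; rewrite /cyc_adj orbb.
have [Hi1|Hi1] : i.+1 = n \/ i.+1 < n by lia.
  by rewrite Hi1 modnn; lia.
by rewrite (modn_small Hi1); lia.
Qed.

Section MaxDegreeTwo.
Variables (V : finType) (r : rel V).
Hypotheses (r_sym : symmetric r) (r_irr : irreflexive r).
Hypothesis r_conn : forall x y, connect r x y.
Hypothesis r_deg2 : forall x y1 y2 y3, r x y1 -> r x y2 -> r x y3 ->
  [|| y1 == y2, y1 == y3 | y2 == y3].

Definition upath (x : V) (p : seq V) := path r x p && uniq (x :: p).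

Lemma upath_size x p : upath x p -> size (x :: p) <= #|V|.
Proof. by case/andP=> _ /card_uniqP <-; apply: max_card. Qed.

Lemma upath_rcons x p y :
  upath x p -> r (last x p) y -> y \notin x :: p -> upath x (rcons p y).
Proof.
by rewrite /upath rcons_path -rcons_cons rcons_uniq => /andP[-> ->] -> ->.
Qed.

Lemma upath_cons x p y : upath x p -> r y x -> y \notin x :: p -> upath y (x :: p).
Proof. by rewrite /upath /= => /andP[-> ->] ->; rewrite andbT => ->. Qed.

Definition maximal_upath x p := [/\ upath x p,
  forall y, r (last x p) y -> y \in x :: p & forall y, r x y -> y \in x :: p].

Lemma exists_maximal_upath (x0 : V) : exists x p, maximal_upath x p.
Proof.
suff ext : forall n x p, #|V| - size (x :: p) <= n -> upath x p ->
    exists x' p', maximal_upath x' p'.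
  by apply: (ext #|V| x0 [::]); rewrite ?leq_subr.
elim=> [|n IHn] x p Hn Hxp; rewrite /= in Hn.
  have Hs := upath_size Hxp; rewrite /= in Hs.
  exists x, p; split=> // y Hy; apply/negPn/negP=> Hny.
    by have := upath_size (upath_rcons Hxp Hy Hny); rewrite /= size_rcons /=; lia.
  by have := upath_size (upath_cons Hxp (etrans (r_sym y x) Hy) Hny); rewrite /=; lia.
have [y /andP[Hy Hny]|no_last] := pickP [pred y | r (last x p) y && (y \notin x :: p)].
  apply: IHn (upath_rcons Hxp Hy Hny); move: Hn; rewrite /= size_rcons; lia.
have [y /andP[Hy Hny]|no_head] := pickP [pred y | r x y && (y \notin x :: p)].
  apply: IHn (upath_cons Hxp (etrans (r_sym y x) Hy) Hny); move: Hn; rewrite /=; lia.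
exists x, p; split=> // y Hy; apply/negPn/negP=> Hny.
  by have := no_last y; rewrite /= Hy Hny.
by have := no_head y; rewrite /= Hy Hny.
Qed.

Section UniquePath.
Variables (x : V) (p : seq V).
Hypothesis xp_upath : upath x p.
Local Notation s := (x :: p).
Local Notation k := (size s).
Local Notation f := (nth x s).

Lemma upath_adj i : i.+1 < k -> r (f i) (f i.+1).
Proof. by case/andP: xp_upath => /(pathP x) Hp _ Hi; apply: Hp; rewrite /= in Hi; lia. Qed.

Lemma upath_nth_eq i j : i < k -> j < k -> (f i == f j) = (i == j).
Proof. by case/andP: xp_upath => _ Hu Hi Hj; rewrite nth_uniq. Qed.

Lemma upath_interior_nbr i z : 0 < i -> i.+1 < k -> r (f i) z -> z = f i.-1 \/ z = f i.+1.
Proof.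
move=> Hi0 Hik Hz; have Hl : r (f i) (f i.-1).
  by rewrite r_sym; have := @upath_adj i.-1; rewrite prednK //; apply; lia.
case/or3P: (r_deg2 Hl (upath_adj Hik) Hz) => /eqP; [|by left|by right].
by move/eqP; rewrite upath_nth_eq; lia.
Qed.

Lemma upath_chord i j : i < j -> j < k -> r (f i) (f j) -> j = i.+1 \/ i = 0 /\ j = k.-1.
Proof.
move=> Hij Hjk Hr; have [Hi0|Hi0] := posnP i; last first.
  by case: (upath_interior_nbr Hi0 _ Hr) => [|/eqP|/eqP]; rewrite ?upath_nth_eq; lia.
have [->|Hj] := eqVneq j k.-1; first by right.
rewrite r_sym in Hr.
by case: (upath_interior_nbr _ _ Hr) => [||/eqP|/eqP]; rewrite ?upath_nth_eq; lia.
Qed.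

End UniquePath.

Lemma maximal_upath_cover x p : maximal_upath x p -> forall z, z \in x :: p.
Proof.
case=> Hxp Hlast Hhead z; set s := x :: p.
suff : z \in [set y | y \in s] by rewrite in_set.
apply: (succ_closed_full r_sym r_conn _ (x := x)); last by rewrite in_set mem_head.
move=> y z'; rewrite !in_set => Hy Hyz.
have Ey := nth_index x Hy; have Hi := index_mem y s; rewrite Hy in Hi.
have [Hi0|Hi0] := posnP (index y s).
  have Eyx : y = x by rewrite -Ey Hi0.
  by apply: Hhead; rewrite -Eyx.
have [Hil|Hil] := eqVneq (index y s) (size s).-1.
  have Eyl : y = last x p by rewrite -Ey Hil nth_last.
  by apply: Hlast; rewrite -Eyl.
rewrite -Ey in Hyz; case: (upath_interior_nbr Hxp Hi0 _ Hyz) => [|->|->];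
  rewrite ?mem_nth //; rewrite /s /= in Hi Hil *; lia.
Qed.

Lemma adj_ord_lt k (f : 'I_k -> V) (g : nat -> nat -> bool) :
  (forall i j, g i j = g j i) -> (forall i : 'I_k, g i i = false) ->
  (forall i j : 'I_k, i < j -> r (f i) (f j) = g i j) ->
  forall i j : 'I_k, r (f i) (f j) = g i j.
Proof.
move=> g_sym g_diag Hlt i j; case: (ltngtP i j) => Hij; first exact: Hlt.
  by rewrite r_sym g_sym Hlt.
by rewrite (val_inj Hij) r_irr g_diag.
Qed.

Lemma maxdeg2_path_or_cycle (x0 : V) : is_path r \/ is_cycle r.
Proof.
have [x [p Hmax]] := exists_maximal_upath x0.
have cover := maximal_upath_cover Hmax; case: Hmax => Hxp _ _.
set s := x :: p in cover; set k := size s.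
pose f (i : 'I_k) := nth x s i.
have f_bij : bijective f.
  have idx_lt z : index z s < k by rewrite index_mem.
  exists (fun z => Ordinal (idx_lt z)) => [i|z]; last by rewrite /f nth_index.
  by apply/val_inj/index_uniq => //; case/andP: Hxp.
pose closing := r (nth x s 0) (nth x s k.-1) && (2 < k).
have f_adj_lt (i j : 'I_k) : i < j ->
    r (f i) (f j) = (j == i.+1 :> nat) || [&& i == 0 :> nat, j == k.-1 :> nat & closing].
  move=> Hij; apply/idP/idP => [Hr|].
    case: (upath_chord Hxp Hij (ltn_ord j) Hr) => [->|[Ei Ej]]; first by rewrite eqxx.
    rewrite /closing -Ei -Ej Hr Ei Ej !eqxx /=; rewrite /k /= in Ej *.
    by move: Hij; rewrite Ei Ej; case: (size p) => [|[|n]].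
  case/orP=> [/eqP Ej|/and3P[/eqP Ei /eqP Ej /andP[Hc _]]].
    by rewrite /f Ej upath_adj // -Ej.
  by rewrite /f Ei Ej.
have [Hc|Hc] := boolP closing.
  have Hk : 2 < k by case/andP: Hc.
  right; exists k, f; split=> //.
  apply: adj_ord_lt => [||i j Hij]; first exact: cyc_adj_sym.
    by move=> i; rewrite cyc_adj_diag.
  by rewrite f_adj_lt // Hc andbT cyc_adj_lt // Hij ltn_ord.
left; exists k, f; split=> //.
apply: (@adj_ord_lt _ f (fun i j => (i.+1 == j) || (j.+1 == i))) => [i j|i|i j Hij];
  first by rewrite orbC.
  by apply/negbTE; rewrite negb_or; apply/andP; split; apply/eqP; lia.
by rewrite f_adj_lt // (negbTE Hc) !andbF orbF; lia.
Qed.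

End MaxDegreeTwo.

Section CompleteBipartite.
Variables (V : finType) (r : rel V).
Hypotheses (r_sym : symmetric r) (r_irr : irreflexive r).

Lemma cbip_star (x : V) (B : {set V}) : B != set0 -> x \notin B -> indep r B ->
  (forall y, y \in B -> r x y) -> is_cbip r (x |: B).
Proof.
move=> B0 xB indB xB_adj; have SA : (x |: B) :\: [set x] = B.
  by apply/setP=> z; rewrite !inE; case: eqP => // ->; rewrite (negbTE xB).
apply/existsP; exists [set x]; rewrite SA B0 indB sub1set setU11 /=; apply/and3P; split.
- by apply/set0Pn; exists x; rewrite set11.
- by apply/forall_inP=> y /set1P->; apply/forall_inP=> z /set1P->; rewrite r_irr.
by apply/forall_inP=> y /set1P->; apply/forall_inP.
Qed.

Lemma cbip_edge (x y : V) : r x y -> is_cbip r [set x; y].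
Proof.
move=> xy; apply: cbip_star => [||| z /set1P-> //].
- by apply/set0Pn; exists y; rewrite set11.
- by rewrite inE; apply: contraTneq xy => ->; rewrite r_irr.
by apply/forall_inP=> z /set1P->; apply/forall_inP=> t /set1P->; rewrite r_irr.
Qed.

Lemma cbip_P3 (x y z : V) : r x y -> r x z -> y != z -> ~~ r y z -> is_cbip r [set x; y; z].
Proof.
move=> xy xz nyz nadj; rewrite -setUA; apply: cbip_star => [|||t].
- by apply/set0Pn; exists y; rewrite !inE eqxx.
- rewrite !inE negb_or; apply/andP; split.
    by apply: contraTneq xy => ->; rewrite r_irr.
  by apply: contraTneq xz => ->; rewrite r_irr.
- apply/forall_inP=> t /set2P[]-> ; apply/forall_inP=> t' /set2P[]->;
    by rewrite ?r_irr // r_sym.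
by case/set2P=> ->.
Qed.

End CompleteBipartite.

Ltac elim_eqs := repeat match goal with
  | H : is_true (_ && _) |- _ => let H1 := fresh "H" in let H2 := fresh "H" in case/andP: H => H1 H2
  | H : is_true (_ || _) |- _ => case/orP: H => H
  | H : is_true ((_, _) == (_, _)) |- _ => rewrite xpair_eqE in H
  | H : is_true (?x != ?x) |- _ => by rewrite eqxx in H
  | H : is_true (?x == ?x) |- _ => clear H
  | H : is_true (?r ?x ?x), I : irreflexive ?r |- _ => by rewrite I in H
  | H : is_true (~~ (_ || _)) |- _ => rewrite negb_or in H
  | H : is_true (~~ (_ && _)) |- _ => rewrite negb_and in H
  | H : is_true (~~ ~~ _) |- _ => rewrite negbK in H
  | H : is_true (?x == ?y) |- _ => move/eqP: H => H; first [subst x | subst y]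
  | H : is_true false |- _ => by []
  end.

Ltac decide_eqs := elim_eqs; repeat (first [done | case: eqP => //= ?; subst; elim_eqs]).

Section Burgeon.
Variables (T : finType) (e : rel T).
Hypotheses (e_sym : symmetric e) (e_irr : irreflexive e).
Local Notation arc := (Bvert e).

Lemma e_neq v u : e v u -> v != u.
Proof. by apply: contraTneq => ->; rewrite e_irr. Qed.

Definition arc_of v u (h : e v u) : arc := exist _ (v, u) h.

Lemma eq_arc_of (a : arc) v u (h : e v u) : (a == arc_of h) = (val a == (v, u)).
Proof. by rewrite -val_eqE. Qed.

Definition partner (a : arc) : T * T := ((val a).2, (val a).1).

Lemma arc_eqE (a b : arc) : (a == b) = ((val a).1 == (val b).1) && ((val a).2 == (val b).2).
Proof. by rewrite -val_eqE -xpair_eqE -!surjective_pairing. Qed.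

Lemma BrelE (a b : arc) :
  Brel e a b = ((val a).1 == (val b).1) && (a != b) || (val b == partner a).
Proof.
case: a b => [[a1 a2] ha] [[b1 b2] hb]; rewrite /Brel /partner arc_eqE /= xpair_eqE.
by rewrite (eq_sym b1) (eq_sym b2); case: (a1 =P b1) => [->|_] /=; rewrite andbC.
Qed.

Lemma Brel_irr : irreflexive (Brel e).
Proof.
case=> [[a1 a2] ha]; rewrite /Brel /= !eqxx /=.
by apply/negP=> /andP[/eqP E _]; rewrite E e_irr in ha.
Qed.

Lemma Brel_sym : symmetric (Brel e).
Proof.
case=> [[a1 a2] ha] [[b1 b2] hb]; rewrite /Brel /=.
by rewrite (eq_sym b1 a1) (eq_sym b2 a2) (eq_sym b1 a2) (eq_sym b2 a1) [(a2 == b1) && _]andbC.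
Qed.

Lemma Brel_nbr (a b : arc) : Brel e a b -> (val b).1 = (val a).1 \/ val b = partner a.
Proof. by rewrite BrelE => /orP[/andP[/eqP -> _]|/eqP ->]; [left|right]. Qed.

Lemma Brel_same_head (a b : arc) : (val a).1 = (val b).1 -> a != b -> Brel e a b.
Proof. by move=> E nab; rewrite BrelE E eqxx nab. Qed.

Lemma partner_inj (a b : arc) : partner a = partner b -> a = b.
Proof.
by move=> [E1 E2]; apply: val_inj; rewrite [val a]surjective_pairing E1 E2 -surjective_pairing.
Qed.

Lemma nonadj_nbrs (a x y : arc) : Brel e a x -> Brel e a y -> x != y -> ~~ Brel e x y ->
  val y = partner a /\ (val x).1 = (val a).1 \/ val x = partner a /\ (val y).1 = (val a).1.
Proof.
move=> ax ay nxy nadj.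
case: (Brel_nbr ax) (Brel_nbr ay) => [hx|px] [hy|py]; [|by left|by right|].
  by move: nadj; rewrite Brel_same_head // hx hy.
by case/eqP: nxy; apply: val_inj; rewrite px py.
Qed.

Lemma Brel_claw_free (a x y z : arc) : Brel e a x -> Brel e a y -> Brel e a z ->
  x != y -> x != z -> y != z -> [|| Brel e x y, Brel e x z | Brel e y z].
Proof.
move=> ax ay az nxy nxz nyz.
have heads (u v : arc) : (val u).1 = (val a).1 -> (val v).1 = (val a).1 -> u != v -> Brel e u v.
  by move=> Eu Ev; apply: Brel_same_head; rewrite Eu Ev.
have partners (u v : arc) : val u = partner a -> val v = partner a -> u != v -> False.
  by move=> Eu Ev /eqP; apply; apply: val_inj; rewrite Eu Ev.
have [hx|px] := Brel_nbr ax; have [hy|py] := Brel_nbr ay.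
- by rewrite heads.
- have [hz|pz] := Brel_nbr az; first by rewrite (heads x z) ?orbT.
  by case: (partners _ _ py pz nyz).
- have [hz|pz] := Brel_nbr az; first by rewrite (heads y z) ?orbT.
  by case: (partners _ _ px pz nxz).
- by case: (partners _ _ px py nxy).
Qed.

Lemma partner_cross (a d b c : arc) : val c = partner a -> (val b).1 = (val a).1 ->
  val b = partner d -> (val c).1 = (val d).1 -> d = c.
Proof.
move=> pc hb pb hc; have E2 : (val d).2 = (val c).2.
  by rewrite -[(val d).2]/((partner d).1) -pb hb pc.
by apply: val_inj; rewrite [val d]surjective_pairing [val c]surjective_pairing hc E2.
Qed.

Lemma Brel_common_nbrs (a d b c : arc) : Brel e a b -> Brel e a c -> Brel e d b ->
  Brel e d c -> a != d -> b != c -> Brel e b c.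
Proof.
move=> ab ac db dc nad nbc; apply/contraT => nadj.
case: (nonadj_nbrs ab ac nbc nadj) (nonadj_nbrs db dc nbc nadj) =>
  [[pc hb]|[pb hc]] [[pc' hb']|[pb' hc']].
- by case/eqP: nad; apply: partner_inj; rewrite -pc -pc'.
- by move: dc; rewrite (partner_cross pc hb pb' hc') Brel_irr.
- by move: db; rewrite (partner_cross pb hc pc' hb') Brel_irr.
- by case/eqP: nad; apply: partner_inj; rewrite -pb -pb'.
Qed.

(* The path (v,w) - (v,u) - (u,v) of B(H), centred at the arc (v,u). *)
Definition betaS v u w : {set arc} := [set a | val a \in [:: (v, u); (v, w); (u, v)]].
Definition pairS v u : {set arc} := [set a | val a \in [:: (v, u); (u, v)]].
Definition wedge v u w := [&& e v u, e v w & u != w].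

Lemma P3_betaS (x y c : arc) : Brel e x y -> Brel e x c -> y != c -> ~~ Brel e y c ->
  exists v u w, wedge v u w /\ [set x; y; c] = betaS v u w.
Proof.
have P3 (y' c' : arc) : x != y' -> (val y').1 = (val x).1 -> val c' = partner x ->
    exists v u w, wedge v u w /\ [set x; y'; c'] = betaS v u w.
  move=> nxy hy pc; exists (val x).1, (val x).2, (val y').2; split.
    rewrite /wedge (valP x) -hy (valP y') /=.
    by apply: contra nxy; rewrite arc_eqE hy eqxx eq_sym.
  apply/setP=> a; rewrite !inE -!val_eqE pc /partner [val y']surjective_pairing hy.
  by rewrite -surjective_pairing orbA.
move=> xy xc nyc nadj; have nxy : x != y by apply: contraTneq xy => ->; rewrite Brel_irr.
have nxc : x != c by apply: contraTneq xc => ->; rewrite Brel_irr.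
case: (nonadj_nbrs xy xc nyc nadj) => [[pc hy]|[py hc]]; first exact: P3.
have [v [u [w [W E]]]] := P3 _ _ nxc hc py.
exists v, u, w; split=> //; rewrite -E; apply/setP=> a; rewrite !inE.
by case: (a == x); case: (a == y); case: (a == c).
Qed.

Lemma cbip_side (S : {set arc}) : is_cbip (Brel e) S -> exists (A : {set arc}) a b,
  [/\ a \in S, b \in S, a \in A, b \notin A &
   forall x y, x \in S -> y \in S -> Brel e x y = ((x \in A) != (y \in A))].
Proof.
case/existsP=> A /and5P[sAS /set0Pn[a Aa] /set0Pn[b] + indA /andP[indB AB]].
rewrite inE => /andP[Ab Sb]; exists A, a, b; split=> //; first exact: subsetP sAS a Aa.
have cross x y : x \in A -> y \in S -> y \notin A -> Brel e x y.
  by move=> Ax Sy Ay; apply: (forall_inP (forall_inP AB x Ax)); rewrite inE Ay.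
move=> x y Sx Sy; case: (boolP (x \in A)) => Ax; case: (boolP (y \in A)) => Ay /=.
- exact/negbTE/(forall_inP (forall_inP indA x Ax)).
- exact: cross.
- by rewrite Brel_sym cross.
- by apply/negbTE/(forall_inP (forall_inP indB x _)); rewrite inE ?Ax ?Ay.
Qed.

Lemma cbip_shape (S : {set arc}) : is_cbip (Brel e) S ->
  (exists a b, Brel e a b /\ S = [set a; b]) \/
  (exists v u w, wedge v u w /\ S = betaS v u w).
Proof.
case/cbip_side=> A [a [b [Sa Sb Aa Ab sideE]]].
have ab : Brel e a b by rewrite sideE // Aa (negbTE Ab).
have [c /and3P[Sc nca ncb]|no3] := pickP [pred c | [&& c \in S, c != a & c != b]]; last first.
  left; exists a, b; split=> //; apply/setP=> d; rewrite !inE.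
  apply/idP/orP=> [Sd|[]/eqP-> //]; apply/orP.
  by have := no3 d; rewrite /= Sd; case: eqP; case: eqP.
right; suff core (x y : arc) : x \in S -> y \in S -> Brel e x y -> c != x -> c != y ->
    (y \in A) = (c \in A) -> exists v u w, wedge v u w /\ S = betaS v u w.
  case: (boolP (c \in A)) => Ac; first by apply: (core b a); rewrite // 1?Brel_sym // Aa Ac.
  by apply: (core a b); rewrite ?(negbTE Ab) ?(negbTE Ac).
move=> Sx Sy xy ncx ncy Ayc.
have xc : Brel e x c by rewrite sideE // -Ayc -sideE.
have nyc : ~~ Brel e y c by rewrite sideE // Ayc eqxx.
have nyc' : y != c by rewrite eq_sym.
have Sxyc : S = [set x; y; c].
  apply/setP=> d; rewrite !inE; apply/idP/idP => [Sd|]; last by rewrite -orbA => /or3P[]/eqP->.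
  apply/negPn/negP; rewrite !negb_or => /andP[/andP[ndx ndy] ndc].
  have [Ady|Ady] := eqVneq (d \in A) (y \in A).
    have xd : Brel e x d by rewrite sideE // Ady -sideE.
    move: (Brel_claw_free xy xc xd nyc'); rewrite !sideE // Ady -Ayc !eqxx /=.
    by rewrite [y == d]eq_sym ndy [c == d]eq_sym ndc => /(_ isT isT).
  have Adx : (d \in A) = (x \in A).
    by move: Ady xy; rewrite sideE //; case: (d \in A); case: (x \in A); case: (y \in A).
  have dy : Brel e d y by rewrite sideE // Adx -sideE.
  have dc : Brel e d c by rewrite sideE // Adx -sideE.
  by move: nyc; rewrite (Brel_common_nbrs xy xc dy dc _ nyc') // eq_sym.
have [v [u [w [W E]]]] := P3_betaS xy xc nyc' nyc.
by exists v, u, w; rewrite Sxyc.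
Qed.


Section Wedge.
Variables (v u w : T) (hu : e v u) (hw : e v w) (nuw : u != w).
Let hu' : e u v := etrans (e_sym u v) hu.

Lemma betaS_triple : betaS v u w = [set arc_of hu; arc_of hw; arc_of hu'].
Proof. by apply/setP=> a; rewrite !inE !eq_arc_of orbA. Qed.

Lemma betaS_card : #|betaS v u w| = 3.
Proof.
rewrite betaS_triple -setUA cardsU1 cards2 !inE !eq_arc_of /= !xpair_eqE !eqxx /=.
by rewrite (negbTE nuw) (negbTE (e_neq hu)) eq_sym (negbTE (e_neq hu)) andbF.
Qed.

Lemma betaS_cbip : is_cbip (Brel e) (betaS v u w).
Proof.
rewrite betaS_triple; apply: (cbip_P3 Brel_sym Brel_irr).
- by rewrite BrelE /= eqxx /= eq_arc_of /= xpair_eqE eqxx nuw.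
- by rewrite BrelE /= eq_arc_of /= !xpair_eqE !eqxx orbT.
- by rewrite eq_arc_of /= xpair_eqE negb_and (e_neq hu).
by rewrite BrelE /= eq_arc_of /= !xpair_eqE /partner /= (negbTE (e_neq hu)) (negbTE nuw).
Qed.

End Wedge.

Lemma betaS_biclique v u w : wedge v u w -> biclique (Brel e) (betaS v u w).
Proof.
case/and3P=> hu hw nuw; apply/andP; split; first exact: betaS_cbip.
apply/forallP=> S'; apply/implyP=> /andP[sub cS'].
case: (cbip_shape cS') => [[a [b [_ E]]]|[v' [u' [w' [/and3P[hu1 hw1 nuw1] E]]]]];
  rewrite E in sub *.
  by have := subset_leq_card sub; rewrite (betaS_card hu hw nuw) cards2; case: (a != b).
by rewrite eq_sym eqEcard sub (betaS_card hu hw nuw) (betaS_card hu1 hw1 nuw1).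
Qed.


Lemma biclique_max (S S' : {set arc}) : biclique (Brel e) S -> S \subset S' ->
  is_cbip (Brel e) S' -> S' = S.
Proof. by case/andP=> _ /forallP/(_ S') max sub cS'; apply/eqP; move: max; rewrite sub cS'. Qed.

Lemma biclique_char (S : {set arc}) : biclique (Brel e) S ->
  (exists v u w, wedge v u w /\ S = betaS v u w) \/
  (exists v u, [/\ e v u, forall x, e v x -> x = u, forall x, e u x -> x = v & S = pairS v u]).
Proof.
move=> bS; case/andP: (bS) => /cbip_shape[[a [b [ab E]]]|?] _; last by left.
have not_sub v u w : e v u -> e v w -> u != w -> ~~ (S \subset betaS v u w).
  move=> hu hw nuw; apply/negP=> sub.
  have := betaS_card hu hw nuw; rewrite (biclique_max bS sub (betaS_cbip hu hw nuw)) E cards2.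
  by case: (a != b).
right; case: a b ab E => [[v u] hu] [[v' u'] hu']; rewrite /Brel /= => ab E.
case/orP: ab => /andP[/eqP Ev nuu'].
  subst v'; case/negP: (not_sub _ _ _ hu hu' nuu').
  by apply/subsetP=> z; rewrite E !inE -!val_eqE /= => /orP[]->; rewrite ?orbT.
move/eqP: nuu' => Eu; subst v' u'; exists v, u; split=> //.
- move=> x hx; apply/eqP/negPn/negP=> nxu; rewrite eq_sym in nxu.
  case/negP: (not_sub _ _ _ hu hx nxu).
  by apply/subsetP=> z; rewrite E !inE -!val_eqE /= => /orP[]->; rewrite ?orbT.
- move=> x hx; apply/eqP/negPn/negP=> nxv; rewrite eq_sym in nxv.
  case/negP: (not_sub _ _ _ hu' hx nxv).
  by apply/subsetP=> z; rewrite E !inE -!val_eqE /= => /orP[]->; rewrite ?orbT.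
by apply/setP=> z; rewrite E !inE -!val_eqE.
Qed.

End Burgeon.

Lemma KBrel_sym (V : finType) (r : rel V) : symmetric (KBrel r).
Proof. by move=> S1 S2; rewrite /KBrel eq_sym setIC. Qed.

Lemma KBrel_irr (V : finType) (r : rel V) : irreflexive (KBrel r).
Proof. by move=> S; rewrite /KBrel eqxx. Qed.

Section BurgeonBicliques.
Variables (T : finType) (e : rel T).
Hypotheses (e_sym : symmetric e) (e_irr : irreflexive e).
Local Notation KB := (KBvert (Brel e)).
Local Notation betaS := (betaS e).
Local Notation wedge := (wedge e).

(* The common edge is (v,u) - (u,v) in the first two cases, (v,u) - (v,w) in the third. *)
Definition wedge_adj (v u w v' u' w' : T) :=
  ((v, u, w) != (v', u', w')) &&
  [|| (v, u) == (v', u'), (v, u) == (u', v') | (v', u', w') == (v, w, u)].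

Lemma betaS_inj v u w v' u' w' : wedge v u w -> wedge v' u' w' ->
  (betaS v u w == betaS v' u' w') = ((v, u, w) == (v', u', w')).
Proof.
case/and3P=> hu hw nuw /and3P[hu' hw' nuw']; apply/eqP/eqP=> [E|[-> -> ->] //].
have mem x y (h : e x y) : (x, y) \in [:: (v, u); (v, w); (u, v)] ->
    (x, y) \in [:: (v', u'); (v', w'); (u', v')].
  move=> xy; have : arc_of h \in betaS v u w by rewrite inE.
  by rewrite E inE.
move: (mem _ _ hu) (mem _ _ hw) (mem _ _ (etrans (e_sym u v) hu)).
rewrite !inE !eqxx /= !orbT !xpair_eqE => /(_ isT) H1 /(_ isT) H2 /(_ isT) H3.
move: H1 H2 H3 nuw nuw' (e_neq e_irr hu) (e_neq e_irr hw) (e_neq e_irr hu') (e_neq e_irr hw').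
by move=> H1 H2 H3 N1 N2 N3 N4 N5 N6; decide_eqs.
Qed.

Lemma KBrel_betaS (S1 S2 : KB) v u w v' u' w' : wedge v u w -> wedge v' u' w' ->
  val S1 = betaS v u w -> val S2 = betaS v' u' w' ->
  KBrel (Brel e) S1 S2 = wedge_adj v u w v' u' w'.
Proof.
move=> W W' E1 E2; rewrite /KBrel /wedge_adj -val_eqE E1 E2 (betaS_inj W W'); apply: andb_id2l => _.
case/and3P: W => hu hw nuw; case/and3P: W' => hu' hw' nuw'.
have nvu := e_neq e_irr hu; have nvw := e_neq e_irr hw.
have nvu' := e_neq e_irr hu'; have nvw' := e_neq e_irr hw'.
apply/existsP/idP=> [[x /existsP[y /and3P[]]]|].
  rewrite !inE /Brel; case: x y => [[x1 x2] hx] [[y1 y2] hy] /=.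
  by rewrite !xpair_eqE => *; decide_eqs.
have hu1 : e u v by rewrite e_sym.
case/or3P=> [/eqP[<- <-]|/eqP[<- <-]|/eqP[-> -> ->]].
1,2: by exists (arc_of hu); apply/existsP; exists (arc_of hu1); rewrite !inE /Brel /= !eqxx ?orbT.
by exists (arc_of hu); apply/existsP; exists (arc_of hw); rewrite !inE /Brel /= !eqxx nuw ?orbT.
Qed.

Hypothesis e_conn : forall x y : T, connect e x y.
Hypothesis some_wedge : exists v u w, wedge v u w.

Lemma KB_betaS (S : KB) : exists v u w, wedge v u w /\ val S = betaS v u w.
Proof.
case: (biclique_char e_sym e_irr (valP S)) => [//|[v [u [hu Hv Hu _]]]].
have [v0 [u0 [w0 /and3P[h1 h2 /negP[]]]]] := some_wedge; apply/eqP.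
have Hvu : v0 \in [set v; u].
  apply: (succ_closed_full e_sym e_conn _ (x := v)); last by rewrite !inE eqxx.
  by move=> x y; rewrite !inE => /orP[]/eqP-> => [/Hv|/Hu]->; rewrite eqxx ?orbT.
by case/set2P: Hvu => E; subst v0; [rewrite (Hv _ h1) (Hv _ h2) | rewrite (Hu _ h1) (Hu _ h2)].
Qed.

Section Representatives.
Variable S0 : KB.

(* Meaningful only when [wedge v u w]; otherwise it is the junk value [S0]. *)
Definition KB_of v u w : KB := insubd S0 (betaS v u w).

Lemma val_KB_of v u w : wedge v u w -> val (KB_of v u w) = betaS v u w.
Proof. by move=> W; rewrite insubdK //; apply: betaS_biclique. Qed.

Lemma KB_ofE (S : KB) v u w : wedge v u w -> val S = betaS v u w -> S = KB_of v u w.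
Proof. by move=> W E; apply: val_inj; rewrite val_KB_of. Qed.

Lemma KBrel_KB_of v u w v' u' w' : wedge v u w -> wedge v' u' w' ->
  KBrel (Brel e) (KB_of v u w) (KB_of v' u' w') = wedge_adj v u w v' u' w'.
Proof. by move=> W W'; apply: KBrel_betaS; rewrite ?val_KB_of. Qed.

Lemma eq_KB_of v u w v' u' w' : wedge v u w -> wedge v' u' w' ->
  (KB_of v u w == KB_of v' u' w') = ((v, u, w) == (v', u', w')).
Proof. by move=> W W'; rewrite -val_eqE !val_KB_of // betaS_inj. Qed.

Section Closure.
Variable P : {set KB}.
Hypothesis P_closed : forall S S', S \in P -> KBrel (Brel e) S S' -> S' \in P.
Local Notation inP v u w := (KB_of v u w \in P).

Lemma P_same_edge v u w w' : wedge v u w -> wedge v u w' -> inP v u w -> inP v u w'.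
Proof.
move=> W W' Pw; have [<- //|nww'] := eqVneq w w'.
by apply: P_closed Pw _; rewrite KBrel_KB_of // /wedge_adj !xpair_eqE !eqxx /= nww'.
Qed.

Lemma P_swap v u w : wedge v u w -> inP v u w -> inP v w u.
Proof.
move=> W Pw; have W' : wedge v w u by case/and3P: W => ? ? ?; rewrite /wedge eq_sym; apply/and3P.
apply: P_closed Pw _; rewrite KBrel_KB_of // /wedge_adj !xpair_eqE !eqxx !orbT andbT.
by case/and3P: W => _ _; apply: contra => /andP[/andP[_ /eqP->]].
Qed.

Lemma P_reverse v u w x : wedge v u w -> wedge u v x -> inP v u w -> inP u v x.
Proof.
move=> W W' Pw; apply: P_closed Pw _; rewrite KBrel_KB_of // /wedge_adj !xpair_eqE !eqxx /=.
by case/and3P: W => hu _ _; rewrite (negbTE (e_neq e_irr hu)).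
Qed.

Lemma P_centre v u w u' w' : wedge v u w -> wedge v u' w' -> inP v u w -> inP v u' w'.
Proof.
move=> W W' Pw; have [Eu|nuu'] := eqVneq u u'; first by subst u'; apply: P_same_edge W W' Pw.
case/and3P: (W) => hu _ _; case/and3P: (W') => hu' _ _.
have W1 : wedge v u u' by rewrite /wedge hu hu' nuu'.
have W2 : wedge v u' u by rewrite /wedge hu hu' eq_sym nuu'.
exact: P_same_edge W2 W' (P_swap W1 (P_same_edge W W1 Pw)).
Qed.

Definition centre_in v := [exists u, exists w, wedge v u w && inP v u w].

Lemma centre_inP v u w : centre_in v -> wedge v u w -> inP v u w.
Proof. by case/existsP=> u0 /existsP[w0 /andP[W0 P0]] W; apply: P_centre W0 W P0. Qed.

Lemma centre_in_step y z z' : centre_in y -> e y z -> e z z' -> z' != y -> centre_in z.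
Proof.
move=> Py hyz hzz' nz'y.
have [w [hw nzw]] : exists w, e y w /\ z != w.
  case/existsP: (Py) => u0 /existsP[w0 /andP[/and3P[hu0 hw0 nuw0] _]].
  by have [Ez|] := eqVneq z u0; [exists w0; rewrite Ez | exists u0].
have W1 : wedge y z w by rewrite /wedge hyz hw nzw.
have W2 : wedge z y z' by rewrite /wedge e_sym hyz hzz' eq_sym nz'y.
apply/existsP; exists y; apply/existsP; exists z'.
by rewrite W2 (P_reverse W1 W2 (centre_inP Py W1)).
Qed.

Lemma KB_closed_full (S S' : KB) : S \in P -> S' \in P.
Proof.
move=> PS.
have [v0 [u0 [w0 [W0 E0]]]] := KB_betaS S.
have Pv0 : centre_in v0.
  by apply/existsP; exists u0; apply/existsP; exists w0; rewrite W0 -(KB_ofE W0 E0).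
pose X := [set z | centre_in z || [exists y, centre_in y && e y z]].
have HX z : z \in X.
  apply: (succ_closed_full e_sym e_conn _ (x := v0)); last by rewrite inE Pv0.
  move=> a b; rewrite !inE => /orP[Pa|/existsP[c /andP[Pc hca]]] hab.
    by apply/orP; right; apply/existsP; exists a; rewrite Pa hab.
  have [->|nbc] := eqVneq b c; first by rewrite Pc.
  by apply/orP; right; apply/existsP; exists a; rewrite (centre_in_step Pc hca hab nbc) hab.
have [v [u [w [W E]]]] := KB_betaS S'.
case/and3P: (W) => hu hw nuw; rewrite (KB_ofE W E); apply: centre_inP W.
move: (HX v); rewrite inE => /orP[//|/existsP[c /andP[Pc hcv]]].
have [Euc|nuc] := eqVneq u c; last exact: centre_in_step Pc hcv hu nuc.
by apply: centre_in_step Pc hcv hw _; rewrite -Euc eq_sym.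
Qed.

End Closure.

End Representatives.

Lemma KB_connected (S S' : KB) : connect (KBrel (Brel e)) S S'.
Proof.
have := @KB_closed_full S [set S2 | connect (KBrel (Brel e)) S S2] _ S S'.
rewrite !inE connect0; apply=> // S1 S2; rewrite !inE => c1 r12.
exact: connect_trans c1 (connect1 r12).
Qed.

End BurgeonBicliques.

Section FewClaws.
Variables (T : finType) (e : rel T).
Hypotheses (e_sym : symmetric e) (e_irr : irreflexive e).
Hypothesis e_conn : forall x y : T, connect e x y.
Local Notation KB := (KBvert (Brel e)).
Local Notation wedge := (wedge e).

Definition claw v a b c := [&& e v a, e v b, e v c, a != b, a != c & b != c].

Hypothesis claw_full : forall v a b c w, claw v a b c -> e v w -> [|| w == a, w == b | w == c].
Hypothesis claw_leaf : forall v a b c x, claw v a b c -> e a x -> x = v.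

Lemma neq_triple (a b c a' b' c' : T) : (a, b, c) != (a', b', c') -> a = a' -> b = b' -> c != c'.
Proof. by move=> H Ea Eb; subst; apply: contra H => /eqP->. Qed.

Lemma wedge_adj_pair v u w v1 u1 w1 v2 u2 w2 :
  wedge v u w -> wedge v1 u1 w1 -> wedge v2 u2 w2 ->
  wedge_adj v u w v1 u1 w1 -> wedge_adj v u w v2 u2 w2 -> (v1, u1, w1) != (v2, u2, w2) ->
  ((v1, u1, w1) == (v, w, u)) || ((v2, u2, w2) == (v, w, u)).
Proof.
move=> /and3P[hu hw nuw] /and3P[hu1 hw1 nuw1] /and3P[hu2 hw2 nuw2] /andP[N1 A1] /andP[N2 A2] N12.
case/or3P: A1 => [/eqP[E1 E2]|/eqP[E1 E2]|->] //; subst v1 u1;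
  case/or3P: A2 => [/eqP[E1 E2]|/eqP[E1 E2]|->]; rewrite ?orbT //; subst v2 u2; exfalso.
- have n1 := neq_triple N1 erefl erefl; have n2 := neq_triple N2 erefl erefl.
  have n12 := neq_triple N12 erefl erefl.
  have := claw_full (_ : claw v u w w1) hw2; rewrite /claw hu hw hw1 nuw nuw1 n1 /=.
  by rewrite eq_sym (negbTE nuw2) eq_sym (negbTE n2) eq_sym (negbTE n12) => /(_ isT).
- have n1 := neq_triple N1 erefl erefl.
  have := claw_leaf (_ : claw v u w w1) hw2; rewrite /claw hu hw hw1 nuw nuw1 n1 => /(_ isT) E.
  by rewrite E eqxx in nuw2.
- have n2 := neq_triple N2 erefl erefl.
  have := claw_leaf (_ : claw v u w w2) hw1; rewrite /claw hu hw hw2 nuw nuw2 n2 => /(_ isT) E.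
  by rewrite E eqxx in nuw1.
- have n12 := neq_triple N12 erefl erefl.
  have := claw_leaf (_ : claw u v w1 w2) hw; rewrite /claw hu1 hw1 hw2 nuw1 nuw2 n12 => /(_ isT) E.
  by rewrite E eqxx in nuw.
Qed.


Lemma KB_deg2 (some_wedge : exists v u w, wedge v u w) (S S1 S2 S3 : KB) :
  KBrel (Brel e) S S1 -> KBrel (Brel e) S S2 -> KBrel (Brel e) S S3 ->
  [|| S1 == S2, S1 == S3 | S2 == S3].
Proof.
have [v [u [w [W E]]]] := KB_betaS e_sym e_irr e_conn some_wedge S.
have [v1 [u1 [w1 [W1 E1]]]] := KB_betaS e_sym e_irr e_conn some_wedge S1.
have [v2 [u2 [w2 [W2 E2]]]] := KB_betaS e_sym e_irr e_conn some_wedge S2.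
have [v3 [u3 [w3 [W3 E3]]]] := KB_betaS e_sym e_irr e_conn some_wedge S3.
rewrite (KBrel_betaS e_sym e_irr W W1 E E1) (KBrel_betaS e_sym e_irr W W2 E E2).
rewrite (KBrel_betaS e_sym e_irr W W3 E E3) => A1 A2 A3.
rewrite -[S1 == S2]val_eqE -[S1 == S3]val_eqE -[S2 == S3]val_eqE E1 E2 E3 !betaS_inj //.
apply/negPn/negP; rewrite !negb_or => /and3P[n12 n13 n23].
case/orP: (wedge_adj_pair W W1 W2 A1 A2 n12) => /eqP H1.
  case/orP: (wedge_adj_pair W W2 W3 A2 A3 n23) => /eqP H2; last by move: n13; rewrite H1 H2 eqxx.
  by move: n12; rewrite H1 H2 eqxx.
case/orP: (wedge_adj_pair W W1 W3 A1 A3 n13) => /eqP H3; first by move: n12; rewrite H1 H3 eqxx.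
by move: n23; rewrite H1 H3 eqxx.
Qed.

End FewClaws.

Section Necklace.
Variables (T : finType) (e : rel T).
Hypotheses (e_sym : symmetric e) (e_irr : irreflexive e).
Hypothesis e_conn : forall x y : T, connect e x y.
Local Notation KB := (KBvert (Brel e)).
Local Notation wedge := (wedge e).
Variables (v a b c : T).
Hypothesis vabc : claw e v a b c.

(* With pt 0, 1, 2 = a, b, c, the wedges (v, pt (armi k), pt (endi k)), k < 6, are
   (v,a,b), (v,a,c), (v,c,a), (v,c,b), (v,b,c), (v,b,a): cyclically consecutive ones
   share their central edge or are swaps of each other. *)
Definition pt (n : nat) := nth a [:: a; b; c] n.
Definition armi (k : nat) := nth 0 [:: 0; 0; 2; 2; 1; 1] k.
Definition endi (k : nat) := nth 1 [:: 1; 2; 0; 1; 2; 0] k.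

Lemma armi_lt k : armi k < 3.
Proof. by rewrite /armi; case: k => [|[|[|[|[|[|k]]]]]] //=; rewrite nth_nil. Qed.
Lemma endi_lt k : endi k < 3.
Proof. by rewrite /endi; case: k => [|[|[|[|[|[|k]]]]]] //=; rewrite nth_nil. Qed.

Lemma pt_inj i j : i < 3 -> j < 3 -> (pt i == pt j) = (i == j).
Proof.
case/and5P: vabc => _ _ _ nab /andP[nac nbc].
case: i => [|[|[|i]]] // _; case: j => [|[|[|j]]] // _; rewrite /pt /= ?eqxx //.
all: by apply/negbTE; rewrite // eq_sym.
Qed.

Lemma e_pt i : i < 3 -> e v (pt i).
Proof. by case/and4P: vabc => ha hb hc _; case: i => [|[|[|i]]]. Qed.

Lemma v_pt i : i < 3 -> (v == pt i) = false.
Proof. by move/e_pt/(e_neq e_irr)/negbTE. Qed.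

Lemma tri_eq i j : i < 6 -> j < 6 ->
  ((v, pt (armi i), pt (endi i)) == (v, pt (armi j), pt (endi j))) = (i == j).
Proof.
rewrite !xpair_eqE eqxx !pt_inj ?armi_lt ?endi_lt //.
by case: i => [|[|[|[|[|[|//]]]]]] _; case: j => [|[|[|[|[|[|//]]]]]].
Qed.

Lemma wedge_tri k : wedge v (pt (armi k)) (pt (endi k)).
Proof.
rewrite /wedge !e_pt ?armi_lt ?endi_lt // pt_inj ?armi_lt ?endi_lt //.
by case: k => [|[|[|[|[|[|k]]]]]] //; rewrite /armi /endi /= !nth_nil.
Qed.

Lemma tri_adj i j : i < 6 -> j < 6 ->
  wedge_adj v (pt (armi i)) (pt (endi i)) v (pt (armi j)) (pt (endi j)) = cyc_adj 6 i j.
Proof.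
move=> Hi Hj; rewrite /wedge_adj tri_eq // !xpair_eqE eqxx v_pt ?armi_lt //=.
rewrite !pt_inj ?armi_lt ?endi_lt //.
by case: i Hi => [|[|[|[|[|[|//]]]]]] _; case: j Hj => [|[|[|[|[|[|//]]]]]].
Qed.

Definition rev6 (k : nat) := nth 0 [:: 5; 2; 1; 4; 3; 0] k.

Lemma tri_swap k : k < 6 -> exists2 k', k' < 6 &
  (v, pt (endi k), pt (armi k)) = (v, pt (armi k'), pt (endi k')).
Proof. by move=> Hk; exists (rev6 k); case: k Hk => [|[|[|[|[|[|//]]]]]]. Qed.

Lemma tri_outside_adj x y z i : i < 6 ->
  (forall k, k < 6 -> (x, y, z) != (v, pt (armi k), pt (endi k))) ->
  wedge_adj x y z v (pt (armi i)) (pt (endi i)) ->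
  ((x, y) == (v, pt (armi i))) || ((x, y) == (pt (armi i), v)).
Proof.
move=> Hi out /andP[_ /or3P[-> //|-> //|/eqP[Ex Ez Ey]]]; rewrite ?orbT //; exfalso.
have [k' Hk' Ek'] := tri_swap Hi.
by move: (out k' Hk'); rewrite -Ek' Ex Ey Ez eqxx.
Qed.

Lemma arms_far i : i < 6 -> armi i != armi ((i.+1 %% 6).+1 %% 6).
Proof. by case: i => [|[|[|[|[|[|//]]]]]]. Qed.

Lemma pt_other w n : [&& w != a, w != b & w != c] -> n < 3 -> (w == pt n) = false.
Proof. by case/and3P=> na nb nc; case: n => [|[|[|//]]] _; apply/negbTE. Qed.

Lemma tri_adj_fourth w k : [&& w != a, w != b & w != c] -> k < 6 ->
  wedge_adj v (pt (armi k)) (pt (endi k)) v a w = (k <= 1).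
Proof.
move=> Hw Hk; rewrite /wedge_adj !xpair_eqE eqxx (eq_sym (pt (endi k))) -[a]/(pt 0).
rewrite !(pt_other Hw) ?armi_lt ?endi_lt // v_pt // andbF /= andbF orbF pt_inj ?armi_lt //.
by case: k Hk => [|[|[|[|[|[|//]]]]]].
Qed.

Lemma tri_adj_arm x k : k < 6 -> wedge_adj v (pt (armi k)) (pt (endi k)) a v x = (k <= 1).
Proof.
move=> Hk; rewrite /wedge_adj !xpair_eqE -[a]/(pt 0) (eq_sym (pt 0)) !v_pt ?armi_lt ?endi_lt //=.
by rewrite eqxx pt_inj ?armi_lt // orbF; case: k Hk => [|[|[|[|[|[|//]]]]]].
Qed.

Lemma common_edge_end (x y A B : T) : v != A -> v != B ->
  ((x, y) == (v, A)) || ((x, y) == (A, v)) -> ((x, y) == (v, B)) || ((x, y) == (B, v)) -> A = B.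
Proof. by rewrite !xpair_eqE => nA nB *; decide_eqs. Qed.

Lemma claw_good_necklace p q s : wedge p q s ->
  (forall k, k < 6 -> wedge_adj v (pt (armi k)) (pt (endi k)) p q s = (k <= 1)) ->
  (forall k, k < 6 -> (v, pt (armi k), pt (endi k)) != (p, q, s)) ->
  has_good_necklace (KBrel (Brel e)).
Proof.
move=> Wd d_adj d_out.
have some_wedge : exists x y z, wedge x y z.
  by exists v, (pt (armi 0)), (pt (endi 0)); apply: wedge_tri.
pose S0 : KB := Sub _ (betaS_biclique e_sym e_irr (wedge_tri 0)).
pose ct (k : 'I_6) := KB_of S0 v (pt (armi k)) (pt (endi k)).
exists 6, 1, ct, (fun => KB_of S0 p q s); split; split.
- by [].
- by [].
- move=> i j /eqP; rewrite eq_KB_of ?wedge_tri // tri_eq // => /eqP; apply: val_inj.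
- by move=> i j; rewrite (ord1 i) (ord1 j).
- by move=> i j; rewrite eq_KB_of ?wedge_tri // d_out.
- by move=> i j; rewrite KBrel_KB_of ?wedge_tri // tri_adj.
- by move=> j j'; rewrite (ord1 j) (ord1 j') KBrel_irr.
- by move=> i j; rewrite KBrel_KB_of ?wedge_tri // d_adj.
move=> S out i j l Ej El Si Sl; exfalso.
have [x [y [z [W E]]]] := KB_betaS e_sym e_irr e_conn some_wedge S.
have outS k : k < 6 -> (x, y, z) != (v, pt (armi k), pt (endi k)).
  move=> Hk; have := out (Ordinal Hk).
  by rewrite (KB_ofE e_sym e_irr S0 W E) /ct eq_KB_of ?wedge_tri.
have adjS (k : 'I_6) : KBrel (Brel e) S (ct k) = wedge_adj x y z v (pt (armi k)) (pt (endi k)).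
  exact: KBrel_betaS (wedge_tri _) E (val_KB_of e_sym e_irr S0 (wedge_tri _)).
rewrite adjS in Si; rewrite adjS in Sl.
(* S meets [ct i] and [ct l] through their central edges, which differ. *)
have far := arms_far (ltn_ord i); rewrite -Ej -El in far.
move: far; rewrite -pt_inj ?armi_lt //; apply/negP/negPn/eqP.
by apply: common_edge_end (tri_outside_adj _ outS Si) (tri_outside_adj _ outS Sl);
  rewrite ?v_pt ?armi_lt.
Qed.

Lemma necklace_of_fourth_nbr w : e v w -> [&& w != a, w != b & w != c] ->
  has_good_necklace (KBrel (Brel e)).
Proof.
move=> hw Hw; case/and4P: vabc => ha _ _ _.
apply: (@claw_good_necklace v a w) => [|k Hk|k Hk]; last 2 first.
- exact: tri_adj_fourth.
- by rewrite !xpair_eqE negb_and (eq_sym (pt (endi k))) pt_other ?endi_lt ?orbT.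
by rewrite /wedge ha hw; case/and3P: Hw; rewrite eq_sym.
Qed.

Lemma necklace_of_arm x : e a x -> x != v -> has_good_necklace (KBrel (Brel e)).
Proof.
move=> hx nxv; case/and4P: vabc => ha _ _ _.
apply: (@claw_good_necklace a v x) => [|k Hk|k Hk]; last 2 first.
- exact: tri_adj_arm.
- by rewrite !xpair_eqE -[a]/(pt 0) v_pt.
by rewrite /wedge e_sym ha hx eq_sym.
Qed.

End Necklace.

Section SingleEdge.
Variables (T : finType) (e : rel T).
Hypotheses (e_sym : symmetric e) (e_irr : irreflexive e).
Hypothesis e_conn : forall x y : T, connect e x y.
Hypothesis no_wedge : forall v u w, e v u -> e v w -> u = w.
Local Notation KB := (KBvert (Brel e)).
Local Notation pairS := (pairS e).

Lemma pairS_edge x y (hxy : e x y) : pairS x y = [set arc_of hxy; arc_of (etrans (e_sym y x) hxy)].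
Proof. by apply/setP=> z; rewrite !inE !eq_arc_of. Qed.

Lemma pairS_biclique x y : e x y -> biclique (Brel e) (pairS x y).
Proof.
move=> hxy; have cardS : #|pairS x y| = 2.
  by rewrite pairS_edge cards2 eq_arc_of /= xpair_eqE negb_and (e_neq e_irr hxy).
apply/andP; split.
  by rewrite pairS_edge; apply: (cbip_edge (Brel_irr e_irr)); rewrite BrelE eqxx orbT.
apply/forallP=> S'; apply/implyP=> /andP[sub cS'].
case: (cbip_shape e_irr cS') => [[a [b [_ E]]]|[v [u [w [/and3P[hu hw] + _]]]]].
  by rewrite eq_sym eqEcard sub cardS E cards2; case: (a != b).
by rewrite (no_wedge hu hw) eqxx.
Qed.

Lemma single_edge_path x y : e x y -> is_path (KBrel (Brel e)).
Proof.
move=> hxy; pose S0 : KB := Sub _ (pairS_biclique hxy).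
have xy_all z : z \in [set x; y].
  apply: (succ_closed_full e_sym e_conn _ (x := x)); last by rewrite !inE eqxx.
  move=> a b; rewrite !inE => /orP[]/eqP-> hab; first by rewrite (no_wedge hxy hab) eqxx orbT.
  by rewrite (no_wedge (etrans (e_sym _ _) hxy) hab) eqxx.
have KB_single S : S = S0.
  apply: val_inj => /=.
  case: (biclique_char e_sym e_irr (valP S)) => [[v [u [w [/and3P[hu hw +] _]]]]|].
    by rewrite (no_wedge hu hw) eqxx.
  case=> v [u [hu _ _ ->]]; have nvu := e_neq e_irr hu.
  case/set2P: (xy_all v) => Ev; case/set2P: (xy_all u) => Eu; subst v u; rewrite ?eqxx // in nvu.
  by apply/setP=> z; rewrite !inE orbC.
exists 1, (fun => S0); split=> //.
  by exists (fun => ord0) => [i|S]; [rewrite (ord1 i) | rewrite (KB_single S)].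
by move=> i j; rewrite (ord1 i) (ord1 j) KBrel_irr.
Qed.

End SingleEdge.

Lemma few_claws_path_or_cycle (T : finType) (e : rel T) (e_sym : symmetric e)
    (e_irr : irreflexive e) (e_conn : forall x y : T, connect e x y)
    (e_edge : exists x y : T, e x y)
    (claw_full : forall v a b c w, claw e v a b c -> e v w -> [|| w == a, w == b | w == c])
    (claw_leaf : forall v a b c x, claw e v a b c -> e a x -> x = v) :
  is_cycle (KBrel (Brel e)) \/ is_path (KBrel (Brel e)).
Proof.
have [/existsP[v /existsP[u /existsP[w W]]]|no_wedge] :=
  boolP [exists v, exists u, exists w, wedge e v u w].
  have some_wedge : exists v u w, wedge e v u w by exists v, u, w.
  have [|] := maxdeg2_path_or_cycle (@KBrel_sym _ _) (@KBrel_irr _ _)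
    (KB_connected e_sym e_irr e_conn some_wedge)
    (KB_deg2 e_sym e_irr e_conn claw_full claw_leaf some_wedge)
    (Sub _ (betaS_biclique e_sym e_irr W)); by [right | left].
right; case: e_edge => x [y hxy].
have unique_nbr v u w : e v u -> e v w -> u = w.
  move=> hu hw; apply/eqP/negPn/negP=> nuw; case/negP: no_wedge.
  apply/existsP; exists v; apply/existsP; exists u; apply/existsP; exists w.
  by rewrite /wedge hu hw nuw.
exact: single_edge_path e_sym e_irr e_conn unique_nbr _ _ hxy.
Qed.

Theorem mainTheorem17 (T : finType) (e : rel T)
    (e_sym : symmetric e) (e_irr : irreflexive e)
    (e_conn : forall x y : T, connect e x y)
    (e_edge : exists x y : T, e x y) :
  is_cycle (KBrel (Brel e)) \/ is_path (KBrel (Brel e)) \/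
  has_good_necklace (KBrel (Brel e)).
Proof.
pose rich_claw v a b c := claw e v a b c &&
  ([exists w, e v w && [&& w != a, w != b & w != c]] || [exists x, e a x && (x != v)]).
have [/existsP[v /existsP[a /existsP[b /existsP[c /andP[vabc]]]]]|poor] :=
  boolP [exists v, exists a, exists b, exists c, rich_claw v a b c].
  case/orP=> [/existsP[w /andP[hw Hw]]|/existsP[x /andP[hx nxv]]]; right; right.
    exact: (necklace_of_fourth_nbr e_sym e_irr e_conn vabc hw Hw).
  exact: (necklace_of_arm e_sym e_irr e_conn vabc hx nxv).
have no_rich v a b c : claw e v a b c -> ~~ rich_claw v a b c.
  move=> vabc; apply: contra poor => rich.
  apply/existsP; exists v; apply/existsP; exists a.
  by apply/existsP; exists b; apply/existsP; exists c.
suff [|] : is_cycle (KBrel (Brel e)) \/ is_path (KBrel (Brel e)) by [left | right; left].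
apply: few_claws_path_or_cycle e_sym e_irr e_conn e_edge _ _ => [v a b c w|v a b c x] vabc.
  move=> hw; apply/negPn/negP; rewrite !negb_or => Hw; case/negP: (no_rich _ _ _ _ vabc).
  by rewrite /rich_claw vabc; apply/orP; left; apply/existsP; exists w; rewrite hw.
move=> hx; apply/eqP/negPn/negP=> nxv; case/negP: (no_rich _ _ _ _ vabc).
by rewrite /rich_claw vabc; apply/orP; right; apply/existsP; exists x; rewrite hx.
Qed.
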